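(* Consider line-point incidence pairs $(\ell,p)$, where $\ell$ is a non-vertical line in $\mathbb{R}^2$ and $p\in\ell$; such a pair is parametrized by the triple $(a,b,\kappa)\in\mathbb{R}^3$, where $p=(a,b)$ and $\kappa$ is the slope of $\ell$. For such a pair with parameters $(a,b,\kappa)$, let $\sigma_{\ell,p}\subset\mathbb{R}^3$ be the set of points $(x,y,w)\in\mathbb{R}^3$ satisfying $$\bigl(y-b-\kappa(x-a)\bigr)\bigl(y-b-w(x-a)\bigr)=2(w-\kappa)\quad\text{and}\quad w\neq\kappa.$$ Let $(\ell_1,p_1)$ and $(\ell_2,p_2)$ be two distinct such incidence pairs, let $\gamma=\sigma_{\ell_1,p_1}\cap\sigma_{\ell_2,p_2}$, and assume $\gamma$ is non-empty. If $(\ell,p)$ is an incidence pair (of the same kind) with $\sigma_{\ell,p}\supseteq\gamma$, then $(\ell,p)=(\ell_1,p_1)$ or $(\ell,p)=(\ell_2,p_2)$.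
   Context: The surface $\sigma_{\ell,p}$ is the locus of parameter triples $(x,y,w)$ of pairs $(\ell',p')$ ($p'=(x,y)$, $\ell'$ of slope $w$ through $p'$) such that the triangle with vertices $p$, $p'$, $\ell\cap\ell'$ has area $1$ with $\vec{op'}$ counterclockwise to $\vec{op}$, where $o=\ell\cap\ell'$. *)

From Stdlib Require Import Reals.
Open Scope R_scope.

(* An incidence pair (l, p), l non-vertical line, p = (a,b) on l,
   parametrized by (a, b, kappa) where kappa is the slope of l. *)
Definition incidence_pair : Type := (R * R * R)%type.

Definition sigma_lp (q : incidence_pair) (x y w : R) : Prop :=
  let '(a, b, k) := q in
  (y - b - k * (x - a)) * (y - b - w * (x - a)) = 2 * (w - k) /\ w <> k.

(* Shearing by an area-preserving affine map that fixes the vertical direction,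
   we may take (l1, p1) to be the origin with the horizontal axis, and p2 off
   that axis: one of the two choices of base pair works unless the two surfaces
   are disjoint.  The surface sigma_0 is then the graph w = y^2 / (2 + x y), and
   on it membership in sigma_(a,b,k) is a polynomial equation in (y, x) that is
   quadratic in x with leading coefficient k b y.
   If k b <> 0, for |y| large in a suitable direction the quadratic has two
   distinct real roots, which are points of gamma; so the quadratic of any
   (l, p) whose surface contains gamma is proportional to it, and comparing
   coefficients of these polynomial identities in y leaves (l, p) = (l1, p1) or
   (l2, p2).  If k = 0 (parallel lines) each slice has a single root x(y),
   rational in y; substituting it gives a polynomial identity in y, which is
   evaluated at y = b and y = 2 b. *)

From Stdlib Require Import Reals Lra List.
Import ListNotations.
Open Scope R_scope.

Fixpoint horner (l : list R) (t : R) : R :=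
  match l with
  | [] => 0
  | c :: l' => c + t * horner l' t
  end.

Definition at_infinity (P : R -> Prop) : Prop :=
  exists M, forall t, M <= Rabs t -> P t.

Definition unbounded (P : R -> Prop) : Prop :=
  forall N, exists t, N <= Rabs t /\ P t.

Lemma at_infinity_and (P Q : R -> Prop) :
  at_infinity P -> at_infinity Q -> at_infinity (fun t => P t /\ Q t).
Proof.
  intros [M HM] [N HN]. exists (Rmax M N). intros t Ht.
  pose proof (Rmax_l M N). pose proof (Rmax_r M N).
  split; [apply HM | apply HN]; lra.
Qed.

Lemma unbounded_and (P Q : R -> Prop) :
  unbounded P -> at_infinity Q -> unbounded (fun t => P t /\ Q t).
Proof.
  intros HP [M HM] N. destruct (HP (Rmax N M)) as [t [Ht Pt]].
  pose proof (Rmax_l N M). pose proof (Rmax_r N M).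
  exists t. split; [lra | split; [exact Pt | apply HM; lra]].
Qed.

Lemma unbounded_of_at_infinity (P : R -> Prop) : at_infinity P -> unbounded P.
Proof.
  intros [M HM] N. exists (Rmax N M).
  pose proof (Rmax_l N M). pose proof (Rmax_r N M). pose proof (Rle_abs (Rmax N M)).
  split; [lra | apply HM; lra].
Qed.

Lemma unbounded_mono (P Q : R -> Prop) :
  (forall t, P t -> Q t) -> unbounded P -> unbounded Q.
Proof. intros PQ HP N. destruct (HP N) as [t [Ht Pt]]. eauto. Qed.

Lemma unbounded_ray (s : R) (P : R -> Prop) :
  s <> 0 -> (exists M, forall t, M <= t -> P (s * t)) -> unbounded P.
Proof.
  intros Hs [M HM] N. set (t := Rmax M (N / Rabs s)).
  assert (Hs' : 0 < Rabs s) by (apply Rabs_pos_lt; exact Hs).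
  exists (s * t). split; [|apply HM, Rmax_l].
  rewrite Rabs_mult.
  assert (N / Rabs s <= Rabs t) by (eapply Rle_trans; [apply Rmax_r | apply Rle_abs]).
  replace N with (Rabs s * (N / Rabs s)) by (field; lra).
  apply Rmult_le_compat_l; lra.
Qed.

Lemma horner_Forall_zero (l : list R) (t : R) :
  Forall (fun c => c = 0) l -> horner l t = 0.
Proof. induction 1 as [|c l Hc _ IH]; simpl; [| rewrite Hc, IH]; ring. Qed.

Lemma horner_bounded_below (l : list R) :
  Exists (fun c => c <> 0) l -> exists e, 0 < e /\ at_infinity (fun t => e <= Rabs (horner l t)).
Proof.
  induction l as [|c l IH]; intros Hl; [inversion Hl|].
  destruct (Forall_Exists_dec (fun c => c = 0) (fun c => Req_dec_T c 0) l) as [Z|NZ].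
  - assert (Hc : c <> 0).
    { inversion Hl as [? ? Hc|? ? Hex]; [exact Hc|].
      apply Exists_exists in Hex as [z [Hz Nz]].
      exfalso. exact (Nz (proj1 (Forall_forall _ l) Z z Hz)). }
    exists (Rabs c). split; [apply Rabs_pos_lt; exact Hc|].
    exists 0. intros t _. simpl. rewrite (horner_Forall_zero l t Z), Rmult_0_r, Rplus_0_r. lra.
  - destruct (IH NZ) as [e [He [M HM]]].
    exists 1. split; [lra|].
    exists (Rmax M ((1 + Rabs c) / e)). intros t Ht. simpl.
    pose proof (HM t (Rle_trans _ _ _ (Rmax_l _ _) Ht)) as Hq.
    assert (Hte : 1 + Rabs c <= e * Rabs t).
    { replace (1 + Rabs c) with (e * ((1 + Rabs c) / e)) by (field; lra).
      apply Rmult_le_compat_l; [lra | eapply Rle_trans; [apply Rmax_r | exact Ht]]. }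
    pose proof (Rabs_triang (c + t * horner l t) (- c)) as Htri.
    rewrite Rabs_Ropp in Htri.
    replace (c + t * horner l t + - c) with (t * horner l t) in Htri by ring.
    rewrite Rabs_mult in Htri.
    pose proof (Rabs_pos t). nra.
Qed.

Lemma poly_nonzero_at_infinity (f : R -> R) (l : list R) :
  (forall t, f t = horner l t) -> Exists (fun c => c <> 0) l -> at_infinity (fun t => f t <> 0).
Proof.
  intros Hf Hl. destruct (horner_bounded_below l Hl) as [e [He [M HM]]].
  exists M. intros t Ht Z. specialize (HM t Ht). rewrite <- Hf, Z, Rabs_R0 in HM. lra.
Qed.

Lemma horner_unbounded_roots (l : list R) :
  unbounded (fun t => horner l t = 0) -> Forall (fun c => c = 0) l.
Proof.
  intros Hz.
  destruct (Forall_Exists_dec (fun c => c = 0) (fun c => Req_dec_T c 0) l) as [Z|NZ]; [exact Z|].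
  destruct (poly_nonzero_at_infinity (horner l) l (fun _ => eq_refl) NZ) as [M HM].
  destruct (Hz M) as [t [Ht Zt]]. contradiction (HM t Ht Zt).
Qed.

Lemma horner_lead_pos (l : list R) (c : R) :
  0 < c -> exists e M, 0 < e /\ forall t, M <= t -> e <= horner (l ++ [c]) t.
Proof.
  intros Hc. induction l as [|c0 l IH].
  - exists c, 0. split; [exact Hc|]. intros t _. simpl. lra.
  - destruct IH as [e [M [He HM]]].
    exists 1, (Rmax (Rmax M 0) ((1 + Rabs c0) / e)). split; [lra|]. intros t Ht. simpl.
    pose proof (Rmax_l (Rmax M 0) ((1 + Rabs c0) / e)).
    pose proof (Rmax_l M 0). pose proof (Rmax_r M 0).
    pose proof (HM t ltac:(lra)) as Hq.
    assert (Hte : 1 + Rabs c0 <= e * t).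
    { replace (1 + Rabs c0) with (e * ((1 + Rabs c0) / e)) by (field; lra).
      apply Rmult_le_compat_l; [lra | eapply Rle_trans; [apply Rmax_r | exact Ht]]. }
    pose proof (Rle_abs (- c0)). rewrite Rabs_Ropp in *. nra.
Qed.

Fixpoint padd (p q : list R) : list R :=
  match p, q with
  | [], _ => q
  | _, [] => p
  | c :: p', d :: q' => (c + d) :: padd p' q'
  end.

Fixpoint pmul (p q : list R) : list R :=
  match p with
  | [] => []
  | c :: p' => padd (map (Rmult c) q) (0 :: pmul p' q)
  end.

Lemma horner_padd (p q : list R) (t : R) : horner (padd p q) t = horner p t + horner q t.
Proof.
  revert q. induction p as [|c p IH]; intros [|d q]; simpl; try ring.
  rewrite IH. ring.
Qed.

Lemma horner_map_mult (c : R) (q : list R) (t : R) : horner (map (Rmult c) q) t = c * horner q t.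
Proof. induction q as [|d q IH]; simpl; [| rewrite IH]; ring. Qed.

Lemma horner_pmul (p q : list R) (t : R) : horner (pmul p q) t = horner p t * horner q t.
Proof.
  induction p as [|c p IH]; simpl; [ring|].
  rewrite horner_padd, horner_map_mult. simpl. rewrite IH. ring.
Qed.

Definition is_poly (f : R -> R) : Prop := exists l, forall t, f t = horner l t.

Lemma is_poly_const (c : R) : is_poly (fun _ => c).
Proof. exists [c]. intro t. simpl. ring. Qed.

Lemma is_poly_id : is_poly (fun t => t).
Proof. exists [0; 1]. intro t. simpl. ring. Qed.

Lemma is_poly_add (f g : R -> R) : is_poly f -> is_poly g -> is_poly (fun t => f t + g t).
Proof.
  intros [p Hp] [q Hq]. exists (padd p q). intro t. rewrite horner_padd, Hp, Hq. reflexivity.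
Qed.

Lemma is_poly_mul (f g : R -> R) : is_poly f -> is_poly g -> is_poly (fun t => f t * g t).
Proof.
  intros [p Hp] [q Hq]. exists (pmul p q). intro t. rewrite horner_pmul, Hp, Hq. reflexivity.
Qed.

Lemma is_poly_opp (f : R -> R) : is_poly f -> is_poly (fun t => - f t).
Proof.
  intros Hf. apply (is_poly_mul (fun _ => -1) f (is_poly_const (-1))) in Hf.
  destruct Hf as [l Hl]. exists l. intro t. rewrite <- Hl. ring.
Qed.

Lemma is_poly_sub (f g : R -> R) : is_poly f -> is_poly g -> is_poly (fun t => f t - g t).
Proof. intros Hf Hg. apply (is_poly_add f (fun t => - g t) Hf (is_poly_opp g Hg)). Qed.

Lemma is_poly_pow (f : R -> R) (n : nat) : is_poly f -> is_poly (fun t => f t ^ n).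
Proof.
  intros Hf. induction n as [|n IH]; simpl; [apply is_poly_const | apply is_poly_mul; assumption].
Qed.

Ltac prove_is_poly :=
  repeat first
    [ apply is_poly_add | apply is_poly_sub | apply is_poly_mul | apply is_poly_opp
    | apply is_poly_pow | apply is_poly_id | apply is_poly_const ].

Lemma is_poly_unbounded_roots (f : R -> R) :
  is_poly f -> unbounded (fun t => f t = 0) -> forall t, f t = 0.
Proof.
  intros [l Hl] Hz t. rewrite Hl. apply horner_Forall_zero, horner_unbounded_roots.
  refine (unbounded_mono _ _ _ Hz). intros s Hs. rewrite <- Hl. exact Hs.
Qed.

Lemma Rmult_eq0_cancel_l (c x : R) : c <> 0 -> c * x = 0 -> x = 0.
Proof. intros Hc E. apply Rmult_integral in E as [E | E]; [contradiction | exact E]. Qed.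

Lemma quadratic_roots_incl (A B C A' B' C' : R) :
  A <> 0 -> 0 < B * B - 4 * A * C ->
  (forall m, A * m * m + B * m + C = 0 -> A' * m * m + B' * m + C' = 0) ->
  A * B' = A' * B /\ A * C' = A' * C.
Proof.
  intros HA HD Hincl.
  set (a := mknonzeroreal A HA).
  assert (Hpos : Delta_is_pos a B C) by (unfold Delta_is_pos, Delta, Rsqr; simpl; lra).
  assert (Hroot : forall r, r = sol_x1 a B C \/ r = sol_x2 a B C ->
                    (A * B' - A' * B) * r + (A * C' - A' * C) = 0).
  { intros r Hr. pose proof (Rsqr_sol_eq_0_1 a B C r Hpos Hr) as E.
    unfold Rsqr in E; simpl in E.
    pose proof (Hincl r ltac:(lra)) as E'.
    replace ((A * B' - A' * B) * r + (A * C' - A' * C))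
      with (A * (A' * r * r + B' * r + C') - A' * (A * r * r + B * r + C)) by ring.
    rewrite E'. replace (A * r * r + B * r + C) with 0 by lra. ring. }
  pose proof (Hroot _ (or_introl eq_refl)) as R1.
  pose proof (Hroot _ (or_intror eq_refl)) as R2.
  assert (Hdist : sol_x1 a B C - sol_x2 a B C <> 0).
  { unfold sol_x1, sol_x2. simpl.
    replace ((- B + sqrt (Delta a B C)) / (2 * A) - (- B - sqrt (Delta a B C)) / (2 * A))
      with (sqrt (Delta a B C) / A) by (field; exact HA).
    apply Rmult_integral_contrapositive_currified; [|apply Rinv_neq_0_compat; exact HA].
    apply Rgt_not_eq, sqrt_lt_R0. unfold Delta, Rsqr. simpl. lra. }
  assert (Hlin : (A * B' - A' * B) * (sol_x1 a B C - sol_x2 a B C) = 0) by lra.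
  apply Rmult_integral in Hlin as [Hlin | Hlin]; [|contradiction].
  split; [lra|]. rewrite Hlin in R1. lra.
Qed.

Definition sigma (q p : incidence_pair) : Prop := let '(x, y, w) := p in sigma_lp q x y w.

(* The shear
   (x, y) |-> (x - a0, y - b0 - k0 (x - a0)) preserves signed areas and vertical
   lines, and moves the pair o = (a0, b0, k0) to the origin with the horizontal axis;
   [shear o] is its action on incidence pairs. *)
Definition shear (o p : incidence_pair) : incidence_pair :=
  let '(a0, b0, k0) := o in let '(x, y, w) := p in (x - a0, y - b0 - k0 * (x - a0), w - k0).

Lemma sigma_shear (o q p : incidence_pair) : sigma q p <-> sigma (shear o q) (shear o p).
Proof.
  destruct o as [[a0 b0] k0], q as [[a b] k], p as [[x y] w]. cbn.
  replace (y - b0 - k0 * (x - a0) - (b - b0 - k0 * (a - a0)) - (k - k0) * (x - a0 - (a - a0)))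
    with (y - b - k * (x - a)) by ring.
  replace (y - b0 - k0 * (x - a0) - (b - b0 - k0 * (a - a0)) - (w - k0) * (x - a0 - (a - a0)))
    with (y - b - w * (x - a)) by ring.
  replace (w - k0 - (k - k0)) with (w - k) by ring.
  split; intros [E N]; split; try exact E; intro Z; apply N; lra.
Qed.

Lemma shear_self (o : incidence_pair) : shear o o = (0, 0, 0).
Proof. destruct o as [[a0 b0] k0]. cbn. f_equal; [f_equal|]; ring. Qed.

Lemma shear_inj (o p p' : incidence_pair) : shear o p = shear o p' -> p = p'.
Proof.
  destruct o as [[a0 b0] k0], p as [[x y] w], p' as [[x' y'] w']. cbn.
  intros E. injection E as Ex Ey Ew.
  assert (x = x') by lra. subst x'. f_equal; [f_equal|]; lra.
Qed.

Lemma shear_surj (o p : incidence_pair) : exists p', shear o p' = p.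
Proof.
  destruct o as [[a0 b0] k0], p as [[X Y] W].
  exists (X + a0, Y + b0 + k0 * X, W + k0). cbn. f_equal; [f_equal|]; ring.
Qed.

Definition off_line (o q : incidence_pair) : Prop :=
  let '(a0, b0, k0) := o in let '(a, b, _) := q in b - b0 - k0 * (a - a0) <> 0.

(* With a k = 0 the pairs (0,0,0) and (a,0,k) share either their line or their point. *)
Lemma sigma_origin_disjoint (a k : R) (p : incidence_pair) :
  a * k = 0 -> (a, 0, k) <> (0, 0, 0) -> sigma (0, 0, 0) p -> sigma (a, 0, k) p -> False.
Proof.
  destruct p as [[x y] w]. cbn. intros Hak Hne [E0 N0] [E1 N1].
  apply Rmult_integral in Hak as [-> | ->].
  - assert (Hk : k <> 0) by (intros ->; apply Hne; reflexivity).
    assert (Hx : x * (y - w * x) = 2).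
    { apply (Rmult_eq_reg_l k); [|exact Hk]. nra. }
    assert (Hsq : (y - w * x) * (y - w * x) = 0) by nra.
    apply Rmult_integral in Hsq as [Z | Z]; rewrite Z in Hx; lra.
  - assert (Ha : a <> 0) by (intros ->; apply Hne; reflexivity).
    assert (Hyw : y * w * a = 0) by nra.
    apply Rmult_integral in Hyw as [Hyw | Hyw]; [|contradiction].
    apply Rmult_integral in Hyw as [-> | Hw]; [|lra].
    apply N0. lra.
Qed.

Lemma base_choice (q1 q2 : incidence_pair) :
  q1 <> q2 -> (exists p, sigma q1 p /\ sigma q2 p) -> off_line q1 q2 \/ off_line q2 q1.
Proof.
  intros Hne [p [S1 S2]].
  destruct q1 as [[a1 b1] k1], q2 as [[a2 b2] k2]. cbn.
  destruct (Req_dec (b2 - b1 - k1 * (a2 - a1)) 0) as [Z1 | Z1]; [right | left; exact Z1].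
  intro Z2.
  assert (Hs : shear (a1, b1, k1) (a2, b2, k2) = (a2 - a1, 0, k2 - k1))
    by (cbn; rewrite Z1; reflexivity).
  apply (sigma_origin_disjoint (a2 - a1) (k2 - k1) (shear (a1, b1, k1) p)).
  - nra.
  - rewrite <- Hs, <- (shear_self (a1, b1, k1)). intro E.
    apply Hne, (shear_inj (a1, b1, k1)). symmetry. exact E.
  - rewrite <- (shear_self (a1, b1, k1)). apply sigma_shear. exact S1.
  - rewrite <- Hs. apply sigma_shear. exact S2.
Qed.

(* A point of sigma_0 is determined by (x, y) = (m, h), with h <> 0, 2 + m h <> 0 and
   w = h^2 / (2 + m h).  [slice_eq a b k h m] is (2 + m h) times the equation of
   sigma_(a,b,k) at that point; the guards exclude the h at which a root m has
   2 + m h = 0 or has slope w equal to k. *)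
Definition slice_eq (a b k h m : R) : R :=
  (h - b - k * (m - a)) * ((h - b) * (2 + m * h) - h * h * (m - a))
  - 2 * (h * h - k * (2 + m * h)).

Definition slice_lin (a b k h : R) : R :=
  - (a * k + b) * h * h + (b * b - a * b * k) * h + 2 * b * k.

Definition slice_const (a b k h : R) : R :=
  a * h ^ 3 + (a * a * k - a * b) * h * h + (2 * a * k - 4 * b) * h
  + (2 * b * b - 2 * a * b * k + 4 * k).

Definition pole_guard (a b k h : R) : R :=
  a * h ^ 3 + a * (a * k - b) * h * h + (4 * a * k - 2 * b) * h + 4 * k.

Definition slope_guard (a b k h : R) : R := (a * k - b) * h + 2 * k.

Lemma slice_eq_expand (a b k h m : R) :
  slice_eq a b k h m = k * b * h * m * m + slice_lin a b k h * m + slice_const a b k h.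
Proof. unfold slice_eq, slice_lin, slice_const. ring. Qed.

Lemma sigma_lp_slice (a b k h m : R) :
  2 + m * h <> 0 ->
  sigma_lp (a, b, k) m h (h * h / (2 + m * h))
  <-> slice_eq a b k h m = 0 /\ h - b - k * (m - a) <> 0.
Proof.
  intros Hd. cbn. set (w := h * h / (2 + m * h)).
  assert (Hid : slice_eq a b k h m
                = (2 + m * h) * ((h - b - k * (m - a)) * (h - b - w * (m - a)) - 2 * (w - k))).
  { unfold w, slice_eq. field. exact Hd. }
  split.
  - intros [E Hw]. split.
    + rewrite Hid, E. ring.
    + intro L. rewrite L, Rmult_0_l in E. apply Hw. lra.
  - intros [E L]. rewrite E in Hid. symmetry in Hid.
    apply Rmult_integral in Hid as [Z | Z]; [contradiction|].
    split; [lra|]. intro Hw. rewrite Hw in Z.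
    apply L, Rsqr_0_uniq. unfold Rsqr. lra.
Qed.

Lemma sigma_lp_origin_slice (h m : R) :
  h <> 0 -> 2 + m * h <> 0 -> sigma_lp (0, 0, 0) m h (h * h / (2 + m * h)).
Proof.
  intros Hh Hd. apply sigma_lp_slice; [exact Hd|]. unfold slice_eq. split; [ring | lra].
Qed.

Lemma pole_guard_spec (a b k h m : R) :
  h <> 0 -> pole_guard a b k h <> 0 -> slice_eq a b k h m = 0 -> 2 + m * h <> 0.
Proof.
  intros Hh HV E Hd.
  assert (Hid : h * slice_eq a b k h m - h * pole_guard a b k h
                = (2 + m * h) * (k * b * (h * m - 2) + slice_lin a b k h)).
  { unfold slice_eq, pole_guard, slice_lin. ring. }
  rewrite E, Hd in Hid.
  assert (Z : h * pole_guard a b k h = 0) by lra.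
  apply Rmult_integral in Z as [Z | Z]; contradiction.
Qed.

Lemma slope_guard_spec (a b k h m : R) :
  slope_guard a b k h <> 0 -> slice_eq a b k h m = 0 -> h - b - k * (m - a) <> 0.
Proof.
  intros HW E L. apply HW.
  assert (Hid : slice_eq a b k h m
                = (h - b - k * (m - a)) * ((h - b) * (2 + m * h) - h * h * (m - a) - 2 * h)
                  + 2 * slope_guard a b k h).
  { unfold slice_eq, slope_guard. ring. }
  rewrite E, L in Hid. lra.
Qed.

Definition regular (a b k h : R) : Prop :=
  h <> 0 /\ pole_guard a b k h <> 0 /\ slope_guard a b k h <> 0.

Lemma slice_roots_incl (a b k A B K : R) :
  (forall p, sigma (0, 0, 0) p /\ sigma (a, b, k) p -> sigma (A, B, K) p) ->
  forall h m, regular a b k h -> slice_eq a b k h m = 0 -> slice_eq A B K h m = 0.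
Proof.
  intros Hincl h m [Hh [HV HW]] E.
  assert (Hd : 2 + m * h <> 0) by (apply (pole_guard_spec a b k h m); assumption).
  apply (sigma_lp_slice A B K h m Hd), (Hincl (m, h, h * h / (2 + m * h))). split.
  - apply sigma_lp_origin_slice; assumption.
  - apply sigma_lp_slice; [exact Hd|]. split; [exact E | apply (slope_guard_spec a b k h m HW E)].
Qed.

Lemma regular_at_infinity (a b k : R) : b <> 0 -> at_infinity (regular a b k).
Proof.
  intros Hb. apply at_infinity_and; [|apply at_infinity_and].
  - exists 1. intros t Ht Z. rewrite Z, Rabs_R0 in Ht. lra.
  - apply (poly_nonzero_at_infinity _ [4 * k; 4 * a * k - 2 * b; a * (a * k - b); a]).
    + intro h. unfold pole_guard. simpl. ring.
    + destruct (Req_dec k 0) as [-> | Hk]; [apply Exists_cons_tl|]; apply Exists_cons_hd; lra.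
  - apply (poly_nonzero_at_infinity _ [2 * k; a * k - b]).
    + intro h. unfold slope_guard. simpl. ring.
    + destruct (Req_dec k 0) as [-> | Hk]; [apply Exists_cons_tl|]; apply Exists_cons_hd; lra.
Qed.

Definition slice_discr (a b k h : R) : R :=
  slice_lin a b k h * slice_lin a b k h - 4 * (k * b * h) * slice_const a b k h.

Lemma slice_discr_unbounded (a b k : R) :
  k <> 0 -> b <> 0 -> unbounded (fun h => 0 < slice_discr a b k h).
Proof.
  intros Hk Hb. set (d := a * k - b).
  assert (HD : forall h, slice_discr a b k h
    = horner [4 * b * b * k * k; 4 * b * b * k * d - 16 * b * k * k;
              b * b * d * d - 12 * b * k * d; - 2 * b * d * d; d * d] h).
  { intro h. unfold slice_discr, slice_lin, slice_const, d. simpl. ring. }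
  destruct (Req_dec d 0) as [Hd | Hd].
  (* For d = 0 the discriminant is 4 b^2 k^2 - 16 b k^2 h, positive along h = - b t. *)
  - apply (unbounded_ray (- b)); [lra|]. exists 0. intros t Ht.
    rewrite HD, Hd. simpl. pose proof (Rsqr_pos_lt b Hb). pose proof (Rsqr_pos_lt k Hk).
    unfold Rsqr in *. nra.
  - assert (Hdd : 0 < d * d) by (pose proof (Rsqr_pos_lt d Hd); unfold Rsqr in *; lra).
    destruct (horner_lead_pos [4 * b * b * k * k; 4 * b * b * k * d - 16 * b * k * k;
                               b * b * d * d - 12 * b * k * d; - 2 * b * d * d] (d * d) Hdd)
      as [e [M [He HM]]].
    apply (unbounded_ray 1); [lra|]. exists M. intros t Ht.
    rewrite HD, Rmult_1_l. specialize (HM t Ht). simpl in *. lra.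
Qed.

Lemma proportional_coeffs (a b k A B K : R) :
  k <> 0 -> b <> 0 ->
  k * b * A = K * B * a ->
  k * b * (A * K + B) = K * B * (a * k + b) ->
  k * b * (B * B - A * B * K) = K * B * (b * b - a * b * k) ->
  k * b * (2 * A * K - 4 * B) = K * B * (2 * a * k - 4 * b) ->
  k * b * (2 * B * B - 2 * A * B * K + 4 * K) = K * B * (2 * b * b - 2 * a * b * k + 4 * k) ->
  (A, B, K) = (0, 0, 0) \/ (A, B, K) = (a, b, k).
Proof.
  intros Hk Hb eA eAKB eBB eAKB' eC.
  assert (Hkb : k * b <> 0) by (apply Rmult_integral_contrapositive_currified; assumption).
  set (l := K * B / (k * b)).
  assert (HKB : K * B = l * (k * b)) by (unfold l; field; split; assumption).
  rewrite HKB in eA, eAKB, eBB, eAKB', eC.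
  assert (HA : A = l * a) by (apply (Rmult_eq_reg_l (k * b)); [lra | exact Hkb]).
  assert (HAKB : A * K + B = l * (a * k + b))
    by (apply (Rmult_eq_reg_l (k * b)); [lra | exact Hkb]).
  assert (HAKB' : 2 * A * K - 4 * B = l * (2 * a * k - 4 * b))
    by (apply (Rmult_eq_reg_l (k * b)); [lra | exact Hkb]).
  assert (HBB : B * B - A * B * K = l * (b * b - a * b * k))
    by (apply (Rmult_eq_reg_l (k * b)); [lra | exact Hkb]).
  assert (HC : 2 * B * B - 2 * A * B * K + 4 * K = l * (2 * b * b - 2 * a * b * k + 4 * k))
    by (apply (Rmult_eq_reg_l (k * b)); [lra | exact Hkb]).
  assert (HB : B = l * b) by lra.
  assert (HK : K = l * k) by lra.
  assert (Hl : l * (l - 1) * (k * b) = 0).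
  { replace (l * (l - 1) * (k * b)) with (K * B - l * (k * b)) by (rewrite HK, HB; ring). lra. }
  apply Rmult_integral in Hl as [Hl | Hl]; [|contradiction].
  apply Rmult_integral in Hl as [-> | Hl]; [left | right; replace l with 1 in * by lra];
    rewrite HA, HB, HK; f_equal; [f_equal| |f_equal|]; ring.
Qed.

Lemma quadratic_case (a b k A B K : R) :
  k <> 0 -> b <> 0 ->
  (forall h m, regular a b k h -> slice_eq a b k h m = 0 -> slice_eq A B K h m = 0) ->
  (A, B, K) = (0, 0, 0) \/ (A, B, K) = (a, b, k).
Proof.
  intros Hk Hb Hroots.
  assert (Hprop : forall h, 0 < slice_discr a b k h /\ regular a b k h ->
            k * b * slice_lin A B K h = K * B * slice_lin a b k h
            /\ k * b * slice_const A B K h = K * B * slice_const a b k h).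
  { intros h [HD Hreg]. pose proof Hreg as [Hh _].
    destruct (quadratic_roots_incl (k * b * h) (slice_lin a b k h) (slice_const a b k h)
                (K * B * h) (slice_lin A B K h) (slice_const A B K h)) as [E1 E2].
    - repeat apply Rmult_integral_contrapositive_currified; assumption.
    - exact HD.
    - intros m Em. rewrite <- slice_eq_expand. apply Hroots; [exact Hreg|].
      rewrite slice_eq_expand. exact Em.
    - split; apply (Rmult_eq_reg_r h); try exact Hh; lra. }
  pose proof (unbounded_mono _ _ Hprop
    (unbounded_and _ _ (slice_discr_unbounded a b k Hk Hb) (regular_at_infinity a b k Hb))) as Hu.
  assert (Hlin : Forall (fun c => c = 0)
    [0; k * b * (B * B - A * B * K) - K * B * (b * b - a * b * k);
     K * B * (a * k + b) - k * b * (A * K + B)]).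
  { apply horner_unbounded_roots. refine (unbounded_mono _ _ _ Hu).
    intros h [E1 _]. unfold slice_lin in E1. simpl. lra. }
  assert (Hconst : Forall (fun c => c = 0)
    [k * b * (2 * B * B - 2 * A * B * K + 4 * K) - K * B * (2 * b * b - 2 * a * b * k + 4 * k);
     k * b * (2 * A * K - 4 * B) - K * B * (2 * a * k - 4 * b);
     k * b * (A * A * K - A * B) - K * B * (a * a * k - a * b);
     k * b * A - K * B * a]).
  { apply horner_unbounded_roots. refine (unbounded_mono _ _ _ Hu).
    intros h [_ E2]. unfold slice_const in E2. simpl. lra. }
  rewrite !Forall_cons_iff in Hlin. rewrite !Forall_cons_iff in Hconst.
  destruct Hlin as (_ & eBB & eAKB & _), Hconst as (eC & eAKB' & _ & eA & _).
  apply proportional_coeffs; auto; lra.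
Qed.

Lemma parallel_slices_proportional (a b A B K : R) :
  b <> 0 ->
  (forall h m, regular a b 0 h -> slice_eq a b 0 h m = 0 -> slice_eq A B K h m = 0) ->
  K * B = 0 /\
  forall h, slice_const A B K h * slice_lin a b 0 h - slice_lin A B K h * slice_const a b 0 h = 0.
Proof.
  intros Hb Hroots.
  set (L := slice_lin a b 0). set (C := slice_const a b 0).
  set (Lq := slice_lin A B K). set (Cq := slice_const A B K).
  assert (HL : at_infinity (fun h => L h <> 0)).
  { apply (poly_nonzero_at_infinity _ [0; b * b; - b]).
    - intro h. unfold L, slice_lin. simpl. ring.
    - apply Exists_cons_tl, Exists_cons_tl, Exists_cons_hd. lra. }
  (* [G h] is [L h ^ 2] times the slice equation of (A,B,K) at the unique root [- C h / L h]. *)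
  set (G := fun h => K * B * h * C h ^ 2 - Lq h * C h * L h + Cq h * L h ^ 2).
  assert (HG : forall h, G h = 0).
  { apply is_poly_unbounded_roots.
    - unfold G, L, C, Lq, Cq, slice_lin, slice_const. prove_is_poly.
    - apply unbounded_of_at_infinity.
      destruct (at_infinity_and _ _ (regular_at_infinity a b 0 Hb) HL) as [M HM].
      exists M. intros h Hh. destruct (HM h Hh) as [Hreg HLh].
      pose proof (Hroots h (- C h / L h) Hreg) as E.
      rewrite !slice_eq_expand in E. fold L C Lq Cq in E.
      replace (G h) with (L h ^ 2 * (K * B * h * (- C h / L h) * (- C h / L h)
                                     + Lq h * (- C h / L h) + Cq h))
        by (unfold G; field; exact HLh).
      rewrite E; [ring | field; exact HLh]. }
  assert (HKB : K * B = 0).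
  { apply (Rmult_eq0_cancel_l (4 * b ^ 5)).
    - apply Rmult_integral_contrapositive_currified; [lra | apply pow_nonzero; exact Hb].
    - rewrite <- (HG b). unfold G, L, C, Lq, Cq, slice_lin, slice_const. ring. }
  split; [exact HKB|].
  apply is_poly_unbounded_roots.
  - unfold L, C, Lq, Cq, slice_lin, slice_const. prove_is_poly.
  - apply unbounded_of_at_infinity. destruct HL as [M HM]. exists M. intros h Hh.
    apply (Rmult_eq0_cancel_l (L h)); [exact (HM h Hh)|]. rewrite <- (HG h).
    unfold G. replace (K * B * h * C h ^ 2) with (K * B * (h * C h ^ 2)) by ring.
    rewrite HKB. ring.
Qed.

Lemma parallel_case (a b A B K : R) :
  b <> 0 ->
  (forall h m, regular a b 0 h -> slice_eq a b 0 h m = 0 -> slice_eq A B K h m = 0) ->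
  (A, B, K) = (0, 0, 0) \/ (A, B, K) = (a, b, 0).
Proof.
  intros Hb Hroots.
  destruct (parallel_slices_proportional a b A B K Hb Hroots) as [HKB HH].
  assert (Hbn : forall n c, c <> 0 -> c * b ^ n <> 0)
    by (intros n c Hc; apply Rmult_integral_contrapositive_currified;
        [exact Hc | apply pow_nonzero, Hb]).
  assert (HHb : B * B - B * b - A * K * b = 0).
  { apply (Rmult_eq0_cancel_l (2 * b ^ 3)); [apply Hbn; lra|].
    assert (E : 2 * b ^ 3 * (B * B - B * b - A * K * b) + (4 * b ^ 2 - 2 * A * b ^ 3) * (K * B) = 0)
      by (rewrite <- (HH b); unfold slice_lin, slice_const; ring).
    rewrite HKB in E. lra. }
  pose proof (HH (2 * b)) as HH2. unfold slice_lin, slice_const in HH2.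
  destruct (Req_dec K 0) as [-> | HK].
  - assert (HBb : B * (B - b) = 0) by lra.
    apply Rmult_integral in HBb as [-> | HBb].
    + left. replace A with 0; [reflexivity|].
      symmetry. apply (Rmult_eq0_cancel_l (- 16 * b ^ 6)); [apply Hbn; lra|].
      rewrite <- HH2. ring.
    + right. replace B with b in * by lra. replace A with a; [reflexivity|].
      assert (HA : A - a = 0).
      { apply (Rmult_eq0_cancel_l (- 8 * b ^ 6)); [apply Hbn; lra|]. rewrite <- HH2. ring. }
      lra.
  - exfalso.
    apply (Rmult_eq0_cancel_l K) in HKB as ->; [|exact HK].
    replace A with 0 in HH2.
    + apply (Hbn 3%nat (- 8 * K)); [lra|]. rewrite <- HH2. ring.
    + symmetry. apply (Rmult_eq0_cancel_l (- K * b)); [nra|]. rewrite <- HHb. ring.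
Qed.

Lemma rigid_at_origin (a b k : R) (q : incidence_pair) :
  b <> 0 ->
  (forall p, sigma (0, 0, 0) p /\ sigma (a, b, k) p -> sigma q p) ->
  q = (0, 0, 0) \/ q = (a, b, k).
Proof.
  intros Hb Hincl. destruct q as [[A B] K].
  assert (Hroots := slice_roots_incl a b k A B K Hincl).
  destruct (Req_dec k 0) as [-> | Hk].
  - exact (parallel_case a b A B K Hb Hroots).
  - exact (quadratic_case a b k A B K Hk Hb Hroots).
Qed.

Lemma rigid_at_base (q1 q2 q : incidence_pair) :
  off_line q1 q2 ->
  (forall p, sigma q1 p /\ sigma q2 p -> sigma q p) -> q = q1 \/ q = q2.
Proof.
  intros Hoff Hincl.
  assert (Hs : exists a b k, shear q1 q2 = (a, b, k) /\ b <> 0).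
  { destruct q1 as [[a1 b1] k1], q2 as [[a2 b2] k2]. cbn in *. eauto. }
  destruct Hs as (a & b & k & Hs & Hb).
  destruct (rigid_at_origin a b k (shear q1 q) Hb) as [E | E].
  - intros p [S0 S2]. destruct (shear_surj q1 p) as [p' <-].
    apply sigma_shear, Hincl. split; apply (sigma_shear q1).
    + rewrite shear_self. exact S0.
    + rewrite Hs. exact S2.
  - left. apply (shear_inj q1). rewrite E, shear_self. reflexivity.
  - right. apply (shear_inj q1). rewrite E, Hs. reflexivity.
Qed.

Theorem lemma1 (q1 q2 : incidence_pair) :
  q1 <> q2 ->
  (exists x y w : R, sigma_lp q1 x y w /\ sigma_lp q2 x y w) ->
  forall q : incidence_pair,
    (forall x y w : R, sigma_lp q1 x y w /\ sigma_lp q2 x y w -> sigma_lp q x y w) ->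
    q = q1 \/ q = q2.
Proof.
  intros Hne (x & y & w & Hxyw) q Hincl.
  assert (Hincl' : forall p, sigma q1 p /\ sigma q2 p -> sigma q p)
    by (intros [[x' y'] w']; apply Hincl).
  destruct (base_choice q1 q2 Hne (ex_intro _ (x, y, w) Hxyw)) as [Hoff | Hoff].
  - exact (rigid_at_base q1 q2 q Hoff Hincl').
  - apply or_comm, (rigid_at_base q2 q1 q Hoff).
    intros p [S2 S1]. apply Hincl'. split; assumption.
Qed.
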